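(* Let $k\ge 1$ be an integer and $p\in[0,1]$. Let $I_1,\dots,I_k$ be independent random variables with $P(I_j=1)=p$, $P(I_j=0)=1-p$. Let $P@i=\frac1i\sum_{j=1}^i I_j$ and $$AP@k=\frac1k\sum_{i=1}^k P@i\cdot I_i.$$ Then $$\operatorname{E}(AP@k)=p\left(p+(1-p)\frac1k H_k\right),$$ where $H_k=\sum_{i=1}^k\frac1i$.
   Context: This is the online evaluation model: each of the top-$k$ recommended items is relevant independently with probability $p$ ($I_j=1$ iff the item at position $j$ is relevant). The expectation is called $MAP_{WR}@k$ in the paper. *)

From mathcomp Require Import all_boot all_order all_algebra.
Set Implicit Arguments. Unset Strict Implicit. Unset Printing Implicit Defensive.
Import Order.TTheory GRing.Theory Num.Theory.
Local Open Scope ring_scope.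

(* An outcome: w j = true iff the item at position j+1 is relevant (I_{j+1}=1). *)
Definition outcome (k : nat) := {ffun 'I_k -> bool}.

Definition ind (R : pzRingType) (k : nat) (w : outcome k) (j : 'I_k) : R :=
  (w j)%:R.

Definition bern_prob (R : pzRingType) (k : nat) (p : R) (w : outcome k) : R :=
  \prod_(j < k) (if w j then p else 1 - p).

(* P@i = (1/i) * sum_{j=1}^i I_j  (positions are 1-based; j : 'I_k is position j+1). *)
Definition Pat (R : fieldType) (k : nat) (w : outcome k) (i : nat) : R :=
  (i%:R)^-1 * \sum_(j < k | (j < i)%N) ind R w j.

Definition APk (R : fieldType) (k : nat) (w : outcome k) : R :=
  (k%:R)^-1 * \sum_(i < k) Pat R w i.+1 * ind R w i.

Definition Ebern (R : fieldType) (k : nat) (p : R) (X : outcome k -> R) : R :=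
  \sum_(w : outcome k) bern_prob p w * X w.

Definition harmonic (R : fieldType) (k : nat) : R :=
  \sum_(i < k) (i.+1%:R)^-1.

From mathcomp Require Import all_boot all_order all_algebra.
From mathcomp Require Import ring.
Import Order.TTheory GRing.Theory Num.Theory.
Local Open Scope ring_scope.

(* By linearity, E(AP@k) is (1/k) sum_i (1/i) sum_(j <= i) E(I_j I_i).  By
   independence E(I_j I_i) is p^2 for j <> i and p for j = i, so the i-th inner
   sum is p + (i - 1) p^2 = i p^2 + p (1 - p), and averaging over i produces the
   harmonic number. *)

Section BernoulliExpectation.
Variables (R : fieldType) (k : nat) (p : R).

Lemma Ebern_ext (X Y : outcome k -> R) : X =1 Y -> Ebern p X = Ebern p Y.
Proof. by move=> eqXY; apply: eq_bigr => w _; rewrite eqXY. Qed.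

Lemma Ebern_sum (I : Type) (r : seq I) (P : pred I) (F : I -> outcome k -> R) :
  Ebern p (fun w => \sum_(i <- r | P i) F i w) = \sum_(i <- r | P i) Ebern p (F i).
Proof. by rewrite /Ebern; under eq_bigr do rewrite mulr_sumr; exact: exchange_big. Qed.

Lemma EbernZ (c : R) (X : outcome k -> R) :
  Ebern p (fun w => c * X w) = c * Ebern p X.
Proof. by rewrite /Ebern mulr_sumr; apply: eq_bigr => w _; rewrite mulrCA. Qed.

Lemma Ebern_prod_ind (S : {set 'I_k}) :
  Ebern p (fun w => \prod_(j in S) ind R w j) = p ^+ #|S|.
Proof.
rewrite -prodr_const big_mkcond /=.
transitivity (\sum_(w : outcome k) \prod_(j < k)
   ((if w j then p else 1 - p) * (if j \in S then (w j)%:R else 1))).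
  apply: eq_bigr => w _.
  by rewrite /bern_prob (big_mkcond (mem S)) -big_split.
(* Expanding the product over coordinates turns the sum over outcomes into a
   product of one-coordinate sums. *)
rewrite -(bigA_distr_bigA (fun (j : 'I_k) (b : bool) =>
   (if b then p else 1 - p) * (if j \in S then b%:R else 1))).
apply: eq_bigr => j _; rewrite big_bool /=.
by case: (j \in S); rewrite ?mulr1 ?mulr0 ?addr0 // addrC subrK.
Qed.

Lemma Ebern_ind_mul (i j : 'I_k) :
  Ebern p (fun w => ind R w j * ind R w i) = if j == i then p else p ^+ 2.
Proof.
have [->|neq_ji] := eqVneq j i; rewrite ?eqxx.
  transitivity (p ^+ #|[set i]|); last by rewrite cards1 expr1.
  rewrite -Ebern_prod_ind; apply: Ebern_ext => w.
  by rewrite big_set1 /ind; case: (w i); rewrite ?mulr1 ?mulr0.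
transitivity (p ^+ #|[set j; i]|); last by rewrite cards2 neq_ji.
rewrite -Ebern_prod_ind; apply: Ebern_ext => w.
by rewrite big_setU1 ?inE // big_set1.
Qed.

End BernoulliExpectation.

Lemma Ebern_Pat_mul_ind (R : numFieldType) (k : nat) (p : R) (i : 'I_k) :
  Ebern p (fun w => Pat R w i.+1 * ind R w i)
  = p * (p + (1 - p) * (i.+1%:R)^-1).
Proof.
have -> : Ebern p (fun w => Pat R w i.+1 * ind R w i)
    = (i.+1%:R)^-1 * \sum_(j < k | (j < i.+1)%N) Ebern p (fun w => ind R w j * ind R w i).
  rewrite -Ebern_sum -EbernZ; apply: Ebern_ext => w.
  by rewrite /Pat -mulrA mulr_suml.
under eq_bigr do rewrite Ebern_ind_mul.
rewrite -(big_ord_widen _ (fun j : nat => if j == i :> nat then p else p ^+ 2) (ltn_ord i)).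
rewrite big_ord_recr /= eqxx.
rewrite (eq_bigr (fun _ => p ^+ 2)) => [|j _]; last by rewrite ifF // ltn_eqF.
rewrite sumr_const card_ord -mulr_natr.
have : (i.+1%:R : R) != 0 by rewrite pnatr_eq0.
by rewrite -addn1 natrD => ?; field.
Qed.

(* The hypotheses on p only make bern_prob a probability law; the identity is
   polynomial in p and holds without them. *)
Theorem theorem3 (R : realFieldType) (k : nat) (p : R) :
  (1 <= k)%N -> 0 <= p -> p <= 1 ->
  Ebern p (@APk R k) = p * (p + (1 - p) * ((k%:R)^-1 * harmonic R k)).
Proof.
move=> k_gt0 _ _.
have k_neq0 : (k%:R : R) != 0 by rewrite pnatr_eq0 -lt0n.
rewrite /APk EbernZ Ebern_sum.
under eq_bigr do rewrite Ebern_Pat_mul_ind.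
rewrite -mulr_sumr big_split /= -mulr_sumr sumr_const card_ord -[p *+ k]mulr_natr.
by rewrite /harmonic; field.
Qed.
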